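(* Let $\vec B$ be a binary digit vector of length $N$. If $x\in\mathbb Q\cap[0,1]$, then $F_{\vec B}(x)\in\mathbb Q$.
   Context: A binary digit vector of length (scale factor) $N\ge3$ is $\vec B=(b_0,\dots,b_{N-1})\in\{0,1\}^N$ with $2\le\|\vec B\|:=\sum_i b_i\le N-1$; its digit set is $D=\{i:b_i=1\}$. With $\phi_d(x)=(x+d)/N$ for $d\in D$, let $\mu_{\vec B}$ be the unique Borel probability measure with $\mu_{\vec B}=\frac{1}{\|\vec B\|}\sum_{d\in D}\mu_{\vec B}\circ\phi_d^{-1}$, supported on the attractor $C_{\vec B}\subset[0,1]$. The CDF is $F_{\vec B}(x)=\mu_{\vec B}([0,x])$, $x\in[0,1]$. *)

From HB Require Import structures.
From mathcomp Require Import all_boot all_order all_algebra.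
From mathcomp Require Import all_classical all_reals all_analysis.
Set Implicit Arguments. Unset Strict Implicit. Unset Printing Implicit Defensive.
Import Order.TTheory GRing.Theory Num.Theory.
Local Open Scope classical_set_scope.
Local Open Scope ring_scope.

Definition bnorm (N : nat) (b : 'I_N -> bool) : nat := #|[pred i | b i]|.

Definition is_binary_digit_vector (N : nat) (b : 'I_N -> bool) : Prop :=
  (3 <= N)%N /\ (2 <= bnorm b)%N /\ (bnorm b <= N.-1)%N.

Definition phi (R : realType) (N : nat) (d : nat) (x : R) : R :=
  (x + d%:R) / N%:R.

Definition self_similar (R : realType) (N : nat) (b : 'I_N -> bool)
  (mu : probability R R) : Prop :=
  forall A : set R, measurable A ->
    (mu A = ((bnorm b)%:R^-1 : R)%:E *
           \sum_(d < N | b d) mu (phi N d @^-1` A))%E.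

Definition cdfB (R : realType) (mu : probability R R) (x : R) : \bar R :=
  mu `[0, x]%classic.

(* The distribution function F y = mu ]-oo, y] satisfies
   F x = ||B||^-1 * sum_(d in D) F (N x - d).  First, mu lives on [0, 1]: the
   mass outside [-c, 1 + c] is bounded by the mass outside [-cN, 1 + cN], hence
   vanishes, and then the mass of ]-oo, 0[ (resp. ]1, +oo[) is at most ||B||^-1
   times itself, since only the digit 0 (resp. N - 1) maps it back into itself.
   For x = p/q in [0, 1) write N x = k + r/q with k < N and r < q; then
   F (p/q) = a + c F (r/q) with a, c rational and 0 <= c <= ||B||^-1 < 1.
   The orbit of p under p |-> N p mod q is eventually periodic, and along a
   cycle these affine relations compose to F y = A + C F y with C < 1, so F is
   rational on the whole orbit. *)

From HB Require Import structures.
From mathcomp Require Import all_boot all_order all_algebra.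
From mathcomp Require Import all_classical all_reals all_analysis.
From mathcomp Require Import measurable_realfun ring lra.
Set Implicit Arguments. Unset Strict Implicit. Unset Printing Implicit Defensive.
Import Order.TTheory GRing.Theory Num.Theory.
Local Open Scope classical_set_scope.
Local Open Scope ring_scope.

Section AffineOrbit.
Variables (R : numFieldType) (T : finType) (f : T -> T) (g : T -> R).
Hypothesis g_affine : forall t, exists a c : rat,
  [/\ 0 <= c, c < 1 & g t = ratr a + ratr c * g (f t)].

Lemma affine_iter n t : exists a c : rat,
  [/\ 0 <= c, c < 1 & g t = ratr a + ratr c * g (iter n.+1 f t)].
Proof.
elim: n t => [|n IHn] t; first exact: g_affine.
have [a [c [c_ge0 c_lt1 ->]]] := g_affine t.
have [a' [c' [c'_ge0 c'_lt1 ->]]] := IHn (f t).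
exists (a + c * a'), (c * c'); split; first exact: mulr_ge0.
  by rewrite -[1]mulr1 ltr_pM.
by rewrite -iterSr rmorphD !rmorphM mulrDr addrA mulrA.
Qed.

Lemma periodic_rat_value n t : iter n.+1 f t = t -> exists z : rat, g t = ratr z.
Proof.
move=> periodic; have [a [c [_ c_lt1 gt]]] := affine_iter n t.
rewrite periodic in gt; exists (a / (1 - c)).
have c1 : ratr (1 - c) != 0 :> R by rewrite fmorph_eq0 subr_eq0 gt_eqF.
rewrite fmorph_div -[g t](mulfK c1); congr (_ / _).
by rewrite rmorphB rmorph1 mulrBr mulr1 {1}gt mulrC addrK.
Qed.

Lemma iter_rat_value n t : (exists z : rat, g (iter n f t) = ratr z) ->
  exists z : rat, g t = ratr z.
Proof.
elim: n t => // n IHn t; rewrite iterSr => /IHn [z gz].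
have [a [c [_ _ ->]]] := g_affine t.
by exists (a + c * z); rewrite gz rmorphD rmorphM.
Qed.

Lemma affine_orbit_rat t : exists z : rat, g t = ratr z.
Proof.
have /trajectP[i lt_i_order orbit_loops] := looping_order f t.
apply: (@iter_rat_value i); apply: (@periodic_rat_value (order f t - i).-1).
by rewrite prednK ?subn_gt0 // -iterD subnK ?orbit_loops // ltnW.
Qed.

End AffineOrbit.

Section Contraction.
Variables (R : realType) (N : nat).
Hypothesis N_gt0 : (0 < N)%N.

Let NR_gt0 : 0 < N%:R :> R. Proof. by rewrite ltr0n. Qed.

Lemma phi_le d (x y : R) : (phi N d y <= x) = (y <= x * N%:R - d%:R).
Proof. by rewrite /phi ler_pdivrMr // lerBrDr. Qed.

Lemma phi_lt d (x y : R) : (phi N d y < x) = (y < x * N%:R - d%:R).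
Proof. by rewrite /phi ltr_pdivrMr // ltrBrDr. Qed.

Lemma le_phi d (x y : R) : (x <= phi N d y) = (x * N%:R - d%:R <= y).
Proof. by rewrite /phi ler_pdivlMr // lerBlDr. Qed.

Lemma lt_phi d (x y : R) : (x < phi N d y) = (x * N%:R - d%:R < y).
Proof. by rewrite /phi ltr_pdivlMr // ltrBlDr. Qed.

Lemma measurable_preimage_phi d (A : set R) :
  measurable A -> measurable (phi N d @^-1` A).
Proof.
move=> mA; rewrite -[_ @^-1` _]setTI.
apply: (measurableT_comp (mulrr_measurable _)) => //.
by apply: measurable_funD => //; exact: measurable_cst.
Qed.

End Contraction.

Section SelfSimilar.
Variables (R : realType) (N : nat) (b : 'I_N -> bool) (mu : probability R R).
Hypotheses (hb : is_binary_digit_vector b) (hs : self_similar b mu).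

Let N_gt1 : (1 < N)%N. Proof. by case: hb => N_ge3 _; apply: leq_trans N_ge3. Qed.
Let N_gt0 : (0 < N)%N. Proof. exact: ltnW. Qed.
Let NR_gt0 : 0 < N%:R :> R. Proof. by rewrite ltr0n. Qed.
Let bnorm_gt1 : (1 < bnorm b)%N. Proof. by case: hb => _ []. Qed.
Let bnormR_gt1 : 1 < (bnorm b)%:R :> R. Proof. by rewrite ltr1n. Qed.
Let bnormR_gt0 : 0 < (bnorm b)%:R :> R. Proof. exact: lt_trans ltr01 bnormR_gt1. Qed.

Definition pr (A : set R) : R := fine (mu A).

Lemma prE A : measurable A -> mu A = (pr A)%:E.
Proof. by move=> mA; rewrite fineK // fin_num_measure. Qed.

Lemma pr_ge0 A : 0 <= pr A.
Proof. exact: fine_ge0. Qed.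

Lemma pr_le A B : measurable A -> measurable B -> A `<=` B -> pr A <= pr B.
Proof.
move=> mA mB AB; rewrite -lee_fin -!prE //.
by apply: le_measure => //; rewrite inE.
Qed.

Lemma pr_self_similar A : measurable A ->
  pr A = (bnorm b)%:R^-1 * \sum_(d < N | b d) pr (phi N d @^-1` A).
Proof.
move=> mA; rewrite {1}/pr hs //= (eq_bigr (fun d : 'I_N => (pr (phi N d @^-1` A))%:E)).
  by rewrite sumEFin -EFinM.
by move=> d _; rewrite -prE //; exact: measurable_preimage_phi.
Qed.

Lemma pr_le_of_preimage A v : measurable A ->
  (forall d : 'I_N, b d -> pr (phi N d @^-1` A) <= v) -> pr A <= v.
Proof.
move=> mA le_v; rewrite pr_self_similar //.
rewrite ler_pdivrMl //; apply: le_trans (ler_sum _ le_v) _.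
by rewrite (eq_bigl [pred d | b d]) // sumr_const mulr_natl.
Qed.

Lemma pr_eq0_of_return A (k : 'I_N) : measurable A ->
  phi N k @^-1` A `<=` A ->
  (forall d : 'I_N, b d -> d != k -> pr (phi N d @^-1` A) = 0) -> pr A = 0.
Proof.
move=> mA returns null.
have mphi (d : 'I_N) : measurable (phi N d @^-1` A).
  exact: measurable_preimage_phi.
have sum_le : \sum_(d < N | b d) pr (phi N d @^-1` A) <= pr A.
  rewrite (bigID (pred1 k)) /= [X in _ + X]big1 ?addr0; last first.
    by move=> d /andP[]; exact: null.
  have [bk|nbk] := boolP (b k).
    rewrite (big_pred1 k) ?pr_le // => d /=.
    by rewrite andbC; case: eqP => // ->.
  rewrite big_pred0 ?pr_ge0 // => d /=.
  by case: eqP => [->|]; rewrite ?andbF // (negbTE nbk).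
have : pr A <= (bnorm b)%:R^-1 * pr A.
  by rewrite {1}pr_self_similar // ler_wpM2l // invr_ge0 ltW.
rewrite ler_pdivlMl //.
have := pr_ge0 A; have := bnormR_gt1; nra.
Qed.

Lemma pr_outside_itv : pr (~` `[-1, 2]%classic) = 0.
Proof.
pose K (c : R) := `[- c, 1 + c]%classic.
have mK c : measurable (~` K c) by apply: measurableC; exact: measurable_itv.
have dilate c : 0 <= c -> pr (~` K c) <= pr (~` K (c * N%:R)).
  move=> c_ge0; apply: pr_le_of_preimage => // d _.
  apply: pr_le => //; first exact: measurable_preimage_phi.
  have d_ge0 := ler0n R d.
  have d_lt : d%:R + 1 <= N%:R :> R by rewrite natr1 ler_nat.
  rewrite preimage_setC; apply: subsetC => y; rewrite /K /= !in_itv /=.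
  by rewrite le_phi // phi_le // => /andP[lo hi]; apply/andP; split; nra.
have K_mono (c c' : R) : c <= c' -> ~` K c' `<=` ~` K c.
  by move=> le_cc'; apply: subsetC => y; rewrite /K /= !in_itv /=; lra.
have le_nat n : pr (~` K 1) <= pr (~` K n%:R).
  apply: (@le_trans _ _ (pr (~` K (N ^ n)%:R))).
    elim: n => [|n IHn]; first by rewrite expn0.
    by rewrite expnSr natrM; apply: le_trans IHn (dilate _ (ler0n _ _)).
  by apply: pr_le => //; apply: K_mono; rewrite ler_nat ltnW // ltn_expl.
have cvg0 : mu (~` K n%:R) @[n --> \oo] --> 0%E.
  have <- : mu (\bigcap_n ~` K n%:R) = 0%E.
    rewrite (_ : \bigcap_n _ = set0) ?measure0 //.
    apply/seteqP; split=> // y /(_ (Num.truncn `|y|).+1 I); apply.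
    rewrite /K /= in_itv /=; have := truncnS_gt `|y|.
    by case: (ler0P y) => y_sgn gt_y; apply/andP; split; lra.
  apply: nonincreasing_cvg_mu => //.
  - exact: le_lt_trans (probability_le1 mu (mK _)) (ltry _).
  - exact: bigcap_measurable.
  - by move=> n m le_nm; apply/subsetPset/K_mono; rewrite ler_nat.
have : ((pr (~` K 1))%:E <= 0)%E.
  rewrite -(cvg_lim _ cvg0) //; apply: lime_ge; first by apply/cvg_ex; exists 0%E.
  by apply: nearW => n /=; rewrite prE // lee_fin.
by rewrite lee_fin => pr_le0; apply/le_anti; rewrite pr_le0 pr_ge0.
Qed.

Lemma pr_lt0 : pr `]-oo, 0[%classic = 0.
Proof.
apply: (@pr_eq0_of_return _ (Ordinal N_gt0)) => //.
  by move=> y; rewrite /= !in_itv /= phi_lt // mul0r subr0.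
move=> d _ d_neq0; apply/le_anti; rewrite pr_ge0 andbT -[leRHS]pr_outside_itv.
apply: pr_le; [exact: measurable_preimage_phi | by apply: measurableC |].
have d_ge1 : 1 <= d%:R :> R.
  by rewrite ler1n lt0n; apply: contra d_neq0 => /eqP d0; apply/eqP/val_inj.
by move=> y; rewrite /= !in_itv /= phi_lt // mul0r sub0r => y_lt; lra.
Qed.

Lemma pr_gt1 : pr `]1, +oo[%classic = 0.
Proof.
have lt_pred : (N.-1 < N)%N by rewrite ltn_predL.
have pred_add1 : N.-1%:R + 1 = N%:R :> R by rewrite natr1 prednK.
apply: (@pr_eq0_of_return _ (Ordinal lt_pred)) => //.
  by move=> y; rewrite /= !in_itv /= !andbT lt_phi // mul1r => y_gt; lra.
move=> d _ d_neq; apply/le_anti; rewrite pr_ge0 andbT -[leRHS]pr_outside_itv.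
apply: pr_le; [exact: measurable_preimage_phi | by apply: measurableC |].
have d_lt : (d.+1 < N)%N.
  rewrite ltn_neqAle ltn_ord andbT; apply: contra d_neq => /eqP/(congr1 predn) Nd.
  exact/eqP/val_inj.
have d_add2 : d%:R + 2 <= N%:R :> R by rewrite -natrD ler_nat addn2.
by move=> y; rewrite /= !in_itv /= !andbT lt_phi // mul1r => y_gt; lra.
Qed.

Definition Fmu (y : R) : R := pr `]-oo, y]%classic.

Lemma Fmu_le1 y : Fmu y <= 1.
Proof. by rewrite -lee_fin -prE //; exact: probability_le1. Qed.

Lemma Fmu_lt0 y : y < 0 -> Fmu y = 0.
Proof.
move=> y_lt0; apply/le_anti; rewrite pr_ge0 andbT -[leRHS]pr_lt0.
by apply: pr_le => // z; rewrite /= !in_itv /= => z_le; lra.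
Qed.

Lemma Fmu_ge1 y : 1 <= y -> Fmu y = 1.
Proof.
move=> y_ge1; have : pr `]y, +oo[%classic <= 0.
  by rewrite -pr_gt1; apply: pr_le => // z; rewrite /= !in_itv /= !andbT => ?; lra.
have := probability_setC mu (measurable_itv `]-oo, y]).
rewrite setCitvl !prE // -EFinB => -[->] pr_le0.
by apply/le_anti; rewrite Fmu_le1 /= /Fmu; lra.
Qed.

Lemma cdfB_Fmu y : 0 <= y -> cdfB mu y = (Fmu y)%:E.
Proof.
move=> y_ge0; rewrite /Fmu -prE // /cdfB.
have -> : `]-oo, y]%classic = `[0, y]%classic `|` `]-oo, 0[%classic.
  apply/seteqP; split=> z /=; rewrite !in_itv /=; last by case=> /[dup]; lra.
  by case: (ltrP z 0) => z0 z_le; [right | left; apply/andP; split].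
have mu_lt0 : mu `]-oo, 0[%classic = 0%E by rewrite prE // pr_lt0.
by rewrite measureU0.
Qed.

Lemma Fmu_self_similar x :
  Fmu x = (bnorm b)%:R^-1 * \sum_(d < N | b d) Fmu (x * N%:R - d%:R).
Proof.
rewrite /Fmu pr_self_similar //; congr (_ * _); apply: eq_bigr => d _.
by congr pr; apply/seteqP; split=> y; rewrite /= !in_itv /= phi_le.
Qed.

Lemma Fmu_phi (k : 'I_N) u : 0 <= u < 1 ->
  Fmu (phi N k u) =
  (#|[pred d : 'I_N | b d & (d < k)%N]|%:R + (b k)%:R * Fmu u) / (bnorm b)%:R.
Proof.
move=> /andP[u_ge0 u_lt1]; rewrite Fmu_self_similar mulrC; congr (_ / _).
have digit (d : 'I_N) : Fmu (phi N k u * N%:R - d%:R) =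
    (d < k)%N%:R + (d == k :> nat)%:R * Fmu u.
  rewrite /phi (divfK (lt0r_neq0 NR_gt0)); case: (ssrnat.ltngtP d k) => dk.
  - have : d%:R + 1 <= k%:R :> R by rewrite natr1 ler_nat.
    by rewrite mul0r addr0 => dk'; apply: Fmu_ge1; lra.
  - have : k%:R + 1 <= d%:R :> R by rewrite natr1 ler_nat.
    by rewrite mul0r addr0 => kd'; apply: Fmu_lt0; lra.
  - by rewrite dk addrK add0r mul1r.
rewrite (eq_bigr _ (fun d _ => digit d)) big_split /= -mulr_suml -natr_sum.
congr (_%:R + _ * _).
  by rewrite -sum1_card big_mkcondr; apply: eq_bigl.
rewrite big_mkcond (bigD1 k) //= eqxx big1 ?addr0; first by case: (b k).
by move=> d dk; rewrite val_eqE (negbTE dk); case: (b d).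
Qed.

Lemma Fmu_ratio_affine p q : (p < q)%N -> exists a c : rat, [/\ 0 <= c, c < 1 &
  Fmu (p%:R / q%:R) = ratr a + ratr c * Fmu (((N * p) %% q)%:R / q%:R)].
Proof.
move=> lt_pq; have q_gt0 : (0 < q)%N := leq_ltn_trans (leq0n p) lt_pq.
have qR_gt0 : 0 < q%:R :> R by rewrite ltr0n.
set k := ((N * p) %/ q)%N; set r := ((N * p) %% q)%N.
have k_lt : (k < N)%N by rewrite ltn_divLR // ltn_pmul2l.
have r_lt : r%:R / q%:R < 1 :> R by rewrite ltr_pdivrMr // mul1r ltr_nat ltn_pmod.
have -> : p%:R / q%:R = phi N (Ordinal k_lt) (r%:R / q%:R) :> R.
  have Np : N%:R * p%:R = k%:R * q%:R + r%:R :> R by rewrite -!natrM -natrD -divn_eq.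
  rewrite /phi /= -[p%:R](mulKf (lt0r_neq0 NR_gt0)) Np.
  by field; rewrite !lt0r_neq0.
exists (#|[pred d : 'I_N | b d & (d < k)%N]|%:R / (bnorm b)%:R).
exists ((b (Ordinal k_lt))%:R / (bnorm b)%:R); split.
- by rewrite divr_ge0.
- rewrite ltr_pdivrMr ?ltr0n ?(ltn_trans _ bnorm_gt1) // mul1r ltr_nat.
  exact: leq_ltn_trans (leq_b1 _) bnorm_gt1.
- rewrite Fmu_phi ?divr_ge0 ?r_lt // !fmorph_div !rmorph_nat.
  by rewrite mulrDl mulrAC.
Qed.

Lemma Fmu_ratio_rat p q : (p < q)%N -> exists z : rat, Fmu (p%:R / q%:R) = ratr z.
Proof.
move=> lt_pq; have q_gt0 : (0 < q)%N := leq_ltn_trans (leq0n p) lt_pq.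
pose f (t : 'I_q) : 'I_q := Ordinal (ltn_pmod (N * t) q_gt0).
pose g (t : 'I_q) := Fmu (t%:R / q%:R).
apply: (affine_orbit_rat (f := f) (g := g) _ (Ordinal lt_pq)).
by move=> t; exact: Fmu_ratio_affine.
Qed.

End SelfSimilar.

Theorem lemma2p6 (R : realType) (N : nat) (b : 'I_N -> bool)
  (mu : probability R R) :
  is_binary_digit_vector b -> self_similar b mu ->
  forall x : rat, 0 <= x <= 1 ->
  exists q : rat, cdfB mu (ratr x) = (ratr q)%:E.
Proof.
move=> hb hs x /andP[x_ge0 x_le1].
have [->|x_neq1] := eqVneq x 1.
  by exists 1; rewrite rmorph1 (cdfB_Fmu hb hs) // (Fmu_ge1 hb hs).
have [p Ep] : exists p : nat, numq x = p.
  by exists `|numq x|%N; rewrite gez0_abs ?numq_ge0.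
have [q Eq] : exists q : nat, denq x = q.
  by exists `|denq x|%N; rewrite gez0_abs ?denq_ge0.
have Ex : x = p%:R / q%:R by rewrite -[x]divq_num_den Ep Eq.
have lt_pq : (p < q)%N.
  have q_gt0 : 0 < q%:R :> rat by rewrite ltr0n -ltz_nat -Eq denq_gt0.
  have : x < 1 by rewrite lt_neqAle x_neq1.
  by rewrite Ex ltr_pdivrMr // mul1r ltr_nat.
have [z Fz] := Fmu_ratio_rat hb hs lt_pq.
by exists z; rewrite (cdfB_Fmu hb hs) ?ler0q // Ex fmorph_div !rmorph_nat Fz.
Qed.
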